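(* Let $G$ be a graph with no edge $e$ satisfying $|F_e|\ge 4$, no induced chordless cycle on 4 vertices, and no induced path on at least 7 vertices, and let $u,v,w$ be an induced path on three vertices in $G$, with $E_i$ and $j$ defined from $u,v,w$ as in the context. Then $|E_j|\le|E_{j-1}|\le\cdots\le|E_0|$; that is, $|E_i|\le|E_{i-1}|$ for every integer $i$ with $1\le i\le j$ (for all $i\ge1$ if $j=\infty$).
   Context: All graphs are finite, simple and undirected. For an edge $e$ of $G$, $F_e$ denotes the set of all edges $e'$ of $G$ such that $V(e)\cup V(e')$ induces a path on three vertices in $G$. Let $u,v,w$ be an induced path on three vertices ($uv,vw\in E(G)$, $uw\notin E(G)$), and $A=\{u,v,w\}$. $B$ is the set of vertices not in $A$ with exactly one or two neighbors in $A$; $C$ is the set of vertices adjacent to all three vertices of $A$; $D$ is the set of vertices not in $A\cup B\cup C$ with at least one neighbor in $C$. For $i\ge1$, $B_i$ is the set of vertices $x\notin A\cup B\cup C\cup D$ whose distance in $G$ to the set $B$ is exactly $i$; $B_0=B$, $B_{-1}=A$. For $i\ge0$, $E_i$ is the set of edges with one endpoint in $B_i$ and the other in $B_{i+1}$. $j$ is the minimum index $i\ge0$ such that there is an edge $e\in E_i$ with $|F_e|\ge3$, and $j=\infty$ if no such index exists. *)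

(* A finite simple graph on a finType T is a symmetric,
   irreflexive boolean relation g : rel T. *)
From mathcomp Require Import all_boot.
Set Implicit Arguments. Unset Strict Implicit. Unset Printing Implicit Defensive.

Section GraphDefs.
Variables (T : finType) (g : rel T).

Definition induced_P3 (x y z : T) : bool :=
  [&& uniq [:: x; y; z], g x y, g y z & ~~ g x z].

Definition induces_P3 (S : {set T}) : bool :=
  (#|S| == 3) && [exists x in S, exists y in S, exists z in S, induced_P3 x y z].

Definition induced_path (p : seq T) : Prop :=
  uniq p /\ forall (x0 : T) (i j : nat), i < size p -> j < size p ->
    g (nth x0 p i) (nth x0 p j) = (i.+1 == j) || (j.+1 == i).

Definition induced_C4 (a b c d : T) : Prop :=
  uniq [:: a; b; c; d] /\ g a b /\ g b c /\ g c d /\ g d a /\ ~~ g a c /\ ~~ g b d.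

Definition edges : {set {set T}} :=
  [set S : {set T} | [exists x, exists y, g x y && (S == [set x; y])]].

Definition Fe (e : {set T}) : {set {set T}} :=
  [set e' in edges | induces_P3 (e :|: e')].

Fixpoint ball (X : {set T}) (k : nat) : {set T} :=
  match k with
  | 0 => X
  | k'.+1 => ball X k' :|: [set y | [exists x in ball X k', g x y]]
  end.

Variables (u v w : T).

Definition setA : {set T} := [set u; v; w].
Definition nbA (x : T) : nat := #|[set y in setA | g x y]|.
Definition setB : {set T} := [set x | (x \notin setA) && (0 < nbA x < 3)].
Definition setC : {set T} := [set x | nbA x == 3].
Definition setD : {set T} :=
  [set x | (x \notin setA :|: setB :|: setC) && [exists y in setC, g x y]].

Definition Bi (i : nat) : {set T} :=
  if i is i'.+1 then
    [set x | [&& x \notin setA :|: setB :|: setC :|: setD,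
                 x \in ball setB i & x \notin ball setB i']]
  else setB.

Definition Ei (i : nat) : {set {set T}} :=
  [set S in edges | [exists x in Bi i, exists y in Bi i.+1, S == [set x; y]]].

Definition bad_index (i : nat) : bool := [exists S in Ei i, 3 <= #|Fe S|].

(* j = Some m : j is the minimum index with a bad edge; j = None : j = infinity *)
Definition is_j (j : option nat) : Prop :=
  match j with
  | Some m => bad_index m /\ forall k, k < m -> ~~ bad_index k
  | None => forall k, ~~ bad_index k
  end.

End GraphDefs.

(* Fix k < j, so that every edge of E_k has |F_e| <= 2.  Every y in B_(k+1)
   has a neighbour x in B_k: the only other candidate would be a vertex d of D,
   but with c in C adjacent to d the edge cd would have
   F_cd >= {cu, cv, cw, dy}.  Hence |B_(k+1)| <= |E_k|.  Moreover y has at most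
   one neighbour in B_(k+2): x has a neighbour p one layer further back (in A
   when k = 0) which is not adjacent to y, so two such neighbours z, z' would
   give F_xy >= {px, yz, yz'}.  Hence |E_(k+1)| <= |B_(k+1)| <= |E_k|. *)
From Pilot Require Import Defs.
From mathcomp Require Import all_boot.
From mathcomp Require Import zify.
Set Implicit Arguments. Unset Strict Implicit. Unset Printing Implicit Defensive.

Lemma uniq_leq_card (T : finType) (s : seq T) (A : {pred T}) :
  uniq s -> {subset s <= A} -> size s <= #|A|.
Proof. by move=> /card_uniqP <- /subsetP; apply: subset_leq_card. Qed.

Lemma card_set3 (T : finType) (a b c : T) :
  uniq [:: a; b; c] -> #|[set a; b; c]| = 3.
Proof.
move=> uq; rewrite -[3]/(size [:: a; b; c]) -(card_uniqP uq).
by apply: eq_card => x; rewrite !inE orbA.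
Qed.

Lemma set_neq_mem (T : finType) (x : T) (A B : {set T}) :
  x \in A -> x \notin B -> A != B.
Proof. by move=> xA; apply: contraNneq => <-. Qed.

Lemma set2_memNl (T : finType) (x y z : T) : z \in [set x; y] -> z != x -> z = y.
Proof. by case/set2P=> [->|//]; rewrite eqxx. Qed.

Lemma set2_memNr (T : finType) (x y z : T) : z \in [set x; y] -> z != y -> z = x.
Proof. by case/set2P=> [//|->]; rewrite eqxx. Qed.

Lemma leq_card_rel (aT rT : finType) (E : {set aT}) (X : {set rT})
    (r : aT -> rT -> bool) :
  {in E, forall a, exists2 x, x \in X & r a x} ->
  {in E &, forall a b x, x \in X -> r a x -> r b x -> a = b} ->
  #|E| <= #|X|.
Proof.
move=> exE uniqE; have [X0|[x0 _]] := set_0Vmem X.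
  rewrite X0 cards0 leqn0 cards_eq0; apply/eqP/setP=> a; rewrite inE.
  by apply/negbTE/negP => /exE[x]; rewrite X0 inE.
pose f a := odflt x0 [pick x in X | r a x].
have fP a : a \in E -> f a \in X /\ r a (f a).
  move=> /exE[x xX rax]; rewrite /f; case: pickP => [y /andP[]//|/(_ x)].
  by rewrite /= xX rax.
have f_inj : {in E &, injective f}.
  move=> a b aE bE fab; have [fX ra] := fP a aE; have [_ rb] := fP b bE.
  by apply: uniqE aE bE _ fX ra _; rewrite fab.
rewrite -(card_in_imset f_inj); apply: subset_leq_card.
by apply/subsetP=> _ /imsetP[a aE ->]; case: (fP a aE).
Qed.

Section Graph.
Variables (T : finType) (g : rel T).
Hypotheses (g_sym : symmetric g) (g_irr : irreflexive g).

Lemma adj_neq x y : g x y -> x != y.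
Proof. by apply: contraTneq => ->; rewrite g_irr. Qed.

Lemma set2_edgesE x y : x != y -> ([set x; y] \in edges g) = g x y.
Proof.
move=> xy; apply/idP/idP => [|gxy]; last first.
  rewrite inE; apply/existsP; exists x.
  by apply/existsP; exists y; rewrite gxy eqxx.
rewrite inE => /existsP[a /existsP[b /andP[gab /eqP Exy]]]; move: xy.
have: x \in [set a; b] by rewrite -Exy set21.
have: y \in [set a; b] by rewrite -Exy set22.
by move=> /set2P[]-> /set2P[]->; rewrite ?eqxx // => _; rewrite // g_sym.
Qed.

Lemma edges_set2 x y : g x y -> [set x; y] \in edges g.
Proof. by move=> gxy; rewrite set2_edgesE // adj_neq. Qed.

Lemma induced_P3I a b c :
  a != c -> g a b -> g b c -> ~~ g a c -> induced_P3 g a b c.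
Proof.
move=> ac gab gbc ngac; rewrite /induced_P3 gab gbc ngac /= !inE !negb_or.
by rewrite adj_neq // ac adj_neq.
Qed.

Lemma induced_P3_Fe a b c : induced_P3 g a b c ->
  [set b; c] \in Fe g [set a; b] /\ [set a; b] \in Fe g [set b; c].
Proof.
move=> abc; have /and4P[uabc gab gbc _] := abc.
have P3abc : induces_P3 g [set a; b; c].
  rewrite /induces_P3 card_set3 // eqxx.
  apply/existsP; exists a; rewrite !inE eqxx /=.
  apply/existsP; exists b; rewrite !inE eqxx orbT /=.
  by apply/existsP; exists c; rewrite !inE eqxx orbT.
have Uabc : [set a; b] :|: [set b; c] = [set a; b; c].
  by apply/setP=> x; rewrite !inE; case: (x == a); case: (x == b).
by split; rewrite inE edges_set2 // 1?(setUC [set b; c]) Uabc.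
Qed.

Section Ball.
Variable X : {set T}.

Lemma ball_mono m n : m <= n -> ball g X m \subset ball g X n.
Proof.
move=> /subnK <-; elim: (n - m) => [|d IH] //=.
exact: subset_trans IH (subsetUl _ _).
Qed.

Lemma ballS x y k : x \in ball g X k -> g x y -> y \in ball g X k.+1.
Proof.
move=> xk gxy; rewrite /= !inE; apply/orP; right.
by apply/existsP; exists x; rewrite xk.
Qed.

Lemma ballSP y k : y \in ball g X k.+1 ->
  y \in ball g X k \/ exists2 x, x \in ball g X k & g x y.
Proof.
by rewrite /= !inE => /orP[->|/existsP[x /andP[xk gxy]]]; [left | right; exists x].
Qed.

End Ball.

Section Layers.
Variables u v w : T.
Hypothesis uvw : induced_P3 g u v w.
Hypothesis noF4 : forall e, e \in edges g -> #|Fe g e| < 4.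

Local Notation A := (setA u v w).
Local Notation B := (setB g u v w).
Local Notation C := (Defs.setC g u v w).
Local Notation D := (Defs.setD g u v w).
Local Notation ball := (ball g B).
Local Notation Bi := (Bi g u v w).
Local Notation Ei := (Ei g u v w).

Lemma cardA : #|A| = 3.
Proof. by have /and4P[uq _ _ _] := uvw; rewrite card_set3. Qed.

Lemma setC_adjA c a : c \in C -> a \in A -> g c a.
Proof.
rewrite inE /nbA -cardA => /eqP cardN aA.
have : [set y in A | g c y] == A.
  by rewrite eqEcard cardN leqnn andbT setIdE subsetIl.
by move/eqP/setP/(_ a); rewrite aA inE aA.
Qed.

Lemma outside_nadjA x a :
  x \notin A -> x \notin B -> x \notin C -> a \in A -> ~~ g x a.
Proof.
move=> xA; rewrite [_ \in B]inE [_ \in C]inE xA /= => xB xC aA.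
have le3 : nbA g u v w x <= 3.
  by rewrite -cardA subset_leq_card // setIdE subsetIl.
have noN : [set y in A | g x y] = set0.
  by apply/eqP; rewrite -cards_eq0; move: xB xC le3; rewrite /nbA; lia.
by apply/negP => gxa; have := in_set0 a; rewrite -noN inE aA gxa.
Qed.

Lemma BiS_notin k y : y \in Bi k.+1 ->
  [/\ y \notin A, y \notin B, y \notin C & y \notin D].
Proof.
by rewrite inE !in_setU !negb_or => /and3P[/andP[/andP[/andP[]]]].
Qed.

Lemma BiS_ball k y : y \in Bi k.+1 -> y \in ball k.+1 /\ y \notin ball k.
Proof. by rewrite inE => /and3P[]. Qed.

Lemma Bi_ball i x : x \in Bi i -> x \in ball i.
Proof. by case: i => [//|i] /BiS_ball[]. Qed.

Lemma Bi_neq a b x y : a < b -> x \in Bi a -> y \in Bi b -> x != y.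
Proof.
case: b => [//|b] ab xa yb; apply: contraTneq yb => <-.
apply/negP => /BiS_ball[_ /negP]; apply.
exact: subsetP (ball_mono B (ab : a <= b)) _ (Bi_ball xa).
Qed.

Lemma BiS_nadjA k y a : y \in Bi k.+1 -> a \in A -> ~~ g y a.
Proof. by case/BiS_notin=> yA yB yC _; apply: outside_nadjA. Qed.

Lemma BiS_nadjC k y c : y \in Bi k.+1 -> c \in C -> ~~ g y c.
Proof.
case/BiS_notin=> yA yB yC; rewrite [y \in D]inE 2!in_setU.
rewrite (negbTE yA) (negbTE yB) (negbTE yC) => /existsPn/(_ c) + cC.
by rewrite cC.
Qed.

Lemma D_nadj_BiS k d y : d \in D -> y \in Bi k.+1 -> ~~ g d y.
Proof.
rewrite [d \in D]inE 2!in_setU !negb_or => /andP[/andP[/andP[dA dB] dC]].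
case/existsP=> c /andP[cC gdc] yk; apply/negP => gdy.
have acFe a : a \in A -> [set a; c] \in Fe g [set c; d].
  move=> aA; apply: (proj2 (induced_P3_Fe _)); apply: induced_P3I.
  - by apply: contraNneq dA => <-.
  - by rewrite g_sym; apply: setC_adjA.
  - by rewrite g_sym.
  - by rewrite g_sym; apply: outside_nadjA.
have ca a : a \in A -> a != c by move=> aA; rewrite eq_sym adj_neq // setC_adjA.
have cy : c != y by case/BiS_notin: yk => _ _ yC _; apply: contraNneq yC => <-.
have dyFe : [set d; y] \in Fe g [set c; d].
  apply: (proj1 (induced_P3_Fe _)); apply: induced_P3I => //.
    by rewrite g_sym.
  by rewrite g_sym (BiS_nadjC yk).
have /and4P[/= uvwuq _ _ _] := uvw; move: uvwuq; rewrite !inE !negb_or.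
case/andP=> /andP[uv uw] /andP[vw _].
have uA : u \in A by rewrite !inE eqxx.
have vA : v \in A by rewrite !inE eqxx orbT.
have wA : w \in A by rewrite !inE eqxx orbT.
have acNac a b : a \in A -> a != b -> [set a; c] != [set b; c].
  by move=> aA ab; apply: (set_neq_mem (set21 a c)); rewrite !inE negb_or ab ca.
have acNdy a : [set a; c] != [set d; y].
  by apply: (set_neq_mem (set22 a c)); rewrite !inE negb_or cy adj_neq // g_sym.
have cdE : [set c; d] \in edges g by rewrite edges_set2 // g_sym.
have := noF4 cdE; rewrite ltnNge => /negP; apply.
apply: (uniq_leq_card
  (s := [:: [set u; c]; [set v; c]; [set w; c]; [set d; y]])).
  by rewrite /= !inE !negb_or !acNac // !acNdy.
by move=> e; rewrite !in_cons in_nil orbF => /or4P[]/eqP->; rewrite ?acFe.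
Qed.

Lemma BiS_nbr_Bi k y : y \in Bi k.+1 -> exists2 x, x \in Bi k & g x y.
Proof.
move=> yk; have [yk1 yk0] := BiS_ball yk.
case: (ballSP yk1) => [ybk|[x xk gxy]]; first by rewrite ybk in yk0.
exists x => //; case: k yk yk0 xk {yk1} => [//|k] yk yk0 xk.
have xk0 : x \notin ball k by apply: contra yk0 => /ballS; apply.
have xB : x \notin B by apply: contra xk0; apply/subsetP/(ball_mono B (leq0n k)).
have xA : x \notin A by apply: contraL gxy => xA; rewrite g_sym (BiS_nadjA yk).
have xC : x \notin C by apply: contraL gxy => xC; rewrite g_sym (BiS_nadjC yk).
have xD : x \notin D by apply: contraL gxy => xD; rewrite (D_nadj_BiS xD yk).
by rewrite inE 3!in_setU (negbTE xA) (negbTE xB) (negbTE xC) (negbTE xD) xk.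
Qed.

Lemma Bi_back_P3 k x y : x \in Bi k -> y \in Bi k.+1 -> g x y ->
  exists p, induced_P3 g p x y.
Proof.
case: k => [|k] xk yk gxy.
  move: xk; rewrite inE => /andP[_ /andP[]]; rewrite /nbA card_gt0.
  case/set0Pn=> a; rewrite inE => /andP[aA gxa] _; exists a.
  apply: induced_P3I => //; last by rewrite g_sym (BiS_nadjA yk).
    by case/BiS_notin: yk => yA _ _ _; apply: contraNneq yA => <-.
  by rewrite g_sym.
have [xk1 xk0] := BiS_ball xk; have [_ yk1] := BiS_ball yk.
case: (ballSP xk1) => [xbk|[p pk gpx]]; first by rewrite xbk in xk0.
exists p; apply: induced_P3I => //.
  by apply: contraNneq yk1 => <-; apply: subsetP (ball_mono B (leqnSn k)) _ pk.
by apply: contra yk1 => /(ballS pk).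
Qed.

Lemma Ei_set2 k x y : x \in Bi k -> y \in Bi k.+1 -> g x y -> [set x; y] \in Ei k.
Proof.
move=> xk yk gxy; rewrite inE edges_set2 //=.
by apply/existsP; exists x; rewrite xk; apply/existsP; exists y; rewrite yk eqxx.
Qed.

Lemma EiP k S : S \in Ei k ->
  exists x y, [/\ S = [set x; y], x \in Bi k, y \in Bi k.+1 & g x y].
Proof.
rewrite inE => /andP[Se /existsP[x /andP[xk /existsP[y /andP[yk /eqP SE]]]]].
exists x, y; split=> //.
by rewrite -set2_edgesE -?SE // (Bi_neq (ltnSn k) xk yk).
Qed.

Lemma Ei_card_Fe_lt3 k S : ~~ bad_index g u v w k -> S \in Ei k -> #|Fe g S| < 3.
Proof. by rewrite negb_exists_in ltnNge => /forall_inP; apply. Qed.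

Lemma BiSS_nbr_uniq k x y z1 z2 : ~~ bad_index g u v w k ->
  x \in Bi k -> y \in Bi k.+1 -> g x y ->
  z1 \in Bi k.+2 -> z2 \in Bi k.+2 -> g y z1 -> g y z2 -> z1 = z2.
Proof.
move=> nb xk yk gxy z1k z2k gyz1 gyz2; apply/eqP/negP => /negP z12.
have [p pxy] := Bi_back_P3 xk yk gxy.
have xz z : z \in Bi k.+2 -> x != z by apply: Bi_neq (leqnSn k.+1) xk.
have yz z : z \in Bi k.+2 -> y != z by apply: Bi_neq (ltnSn k.+1) yk.
have yzFe z : z \in Bi k.+2 -> g y z -> [set y; z] \in Fe g [set x; y].
  move=> zk gyz; apply: (proj1 (induced_P3_Fe _)); apply: induced_P3I => //.
    exact: xz.
  by apply: contra (BiS_ball zk).2; apply: ballS (Bi_ball xk).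
have pxNyz z : z \in Bi k.+2 -> [set p; x] != [set y; z].
  move=> zk; apply: (set_neq_mem (set22 p x)).
  by rewrite !inE negb_or adj_neq ?xz.
have := Ei_card_Fe_lt3 nb (Ei_set2 xk yk gxy); rewrite ltnNge => /negP; apply.
apply: (uniq_leq_card (s := [:: [set p; x]; [set y; z1]; [set y; z2]])).
  rewrite /= !inE !negb_or !pxNyz //= andbT; apply: (set_neq_mem (set22 y z1)).
  by rewrite !inE negb_or z12 eq_sym yz.
by move=> e; rewrite !in_cons in_nil orbF => /or3P[]/eqP->;
  rewrite ?yzFe ?(proj2 (induced_P3_Fe pxy)).
Qed.

Lemma card_BiS_le_Ei k : #|Bi k.+1| <= #|Ei k|.
Proof.
apply: (leq_card_rel (r := fun (y : T) (S : {set T}) => y \in S)).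
  move=> y yk; have [x xk gxy] := BiS_nbr_Bi yk.
  by exists [set x; y]; [apply: Ei_set2 | apply: set22].
move=> y1 y2 y1k y2k _ /EiP[x [y [-> xk _ _]]].
have upper z : z \in Bi k.+1 -> z \in [set x; y] -> z = y.
  by move=> zk /set2_memNl; apply; rewrite eq_sym (Bi_neq (ltnSn k) xk zk).
by move=> /(upper _ y1k) -> /(upper _ y2k) ->.
Qed.

Lemma card_EiS_le_BiS k : ~~ bad_index g u v w k -> #|Ei k.+1| <= #|Bi k.+1|.
Proof.
move=> nb; apply: (leq_card_rel (r := fun (S : {set T}) (y : T) => y \in S)).
  by move=> _ /EiP[y [z [-> yk _ _]]]; exists y; [| apply: set21].
move=> _ _ /EiP[y1 [z1 [-> _ z1k gyz1]]] /EiP[y2 [z2 [-> _ z2k gyz2]]] y yk.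
have lower z t : t \in Bi k.+2 -> y \in [set z; t] -> y = z.
  by move=> tk /set2_memNr; apply; apply: Bi_neq (ltnSn k.+1) yk tk.
move=> /(lower _ _ z1k) y1E /(lower _ _ z2k) y2E; subst y1 y2.
have [x xk gxy] := BiS_nbr_Bi yk.
by rewrite (BiSS_nbr_uniq nb xk yk gxy z1k z2k gyz1 gyz2).
Qed.

End Layers.
End Graph.

Theorem corollary1 (T : finType) (g : rel T)
  (g_sym : symmetric g) (g_irr : irreflexive g)
  (noF4 : forall e, e \in edges g -> #|Fe g e| < 4)
  (noC4 : forall a b c d : T, ~ induced_C4 g a b c d)
  (noP7 : forall p : seq T, induced_path g p -> size p < 7)
  (u v w : T) (huvw : induced_P3 g u v w)
  (j : option nat) (hj : is_j g u v w j) :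
  forall i : nat, 1 <= i ->
    (if j is Some m then i <= m else true) ->
    #|Ei g u v w i| <= #|Ei g u v w i.-1|.
Proof.
case=> [//|k] _ kj /=.
have nb : ~~ bad_index g u v w k.
  by case: j hj kj => [m [_ below] km|none _]; [apply: below | apply: none].
exact: leq_trans (card_EiS_le_BiS g_sym g_irr huvw noF4 nb)
                 (card_BiS_le_Ei g_sym g_irr huvw noF4 k).
Qed.
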